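(* For each $n\ge1$ let $f_n:\{1,\dots,n\}^2\to[0,\infty)$ be non-decreasing in each of its two arguments separately. Suppose that $\liminf_{n\to\infty}f_n(p_n,q_n)>0$ for every sequence $\{(p_n,q_n)\}$ with $(p_n,q_n)\in\{1,\dots,n\}^2$ satisfying either of the following: (i) $q_n\equiv1$ and $\lim_{n\to\infty}p_n/n$ exists and lies in $(0,1)$; (ii) $\lim_{n\to\infty}q_n=\infty$ and $\lim_{n\to\infty}p_nq_n^2/n$ exists and lies in $(0,\infty)$. Then $\liminf_{n\to\infty}f_n(p_n,q_n)>0$ for every sequence $\{(p_n,q_n)\}$ with $1\le p_n,q_n\le n$ such that $\lim_{n\to\infty}p_nq_n^2/n$ exists and lies in $(0,\infty)$. *)

From Stdlib Require Import Reals Lra Lia.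
From Coquelicot Require Import Coquelicot.
Open Scope R_scope.

(* The sequence n |-> (p_n, q_n) lies in {1..n}^2 for every n >= 1
   (index 0 is irrelevant: sequences are indexed by n >= 1). *)
Definition in_box (p q : nat -> nat) : Prop :=
  forall n : nat, (1 <= n)%nat ->
    (1 <= p n <= n)%nat /\ (1 <= q n <= n)%nat.

Definition admissible_family (f : nat -> nat -> nat -> R) : Prop :=
  (forall n p q, (1 <= n)%nat -> (1 <= p <= n)%nat -> (1 <= q <= n)%nat ->
      0 <= f n p q) /\
  (forall n p p' q, (1 <= p)%nat -> (p <= p')%nat -> (p' <= n)%nat ->
      (1 <= q <= n)%nat -> f n p q <= f n p' q) /\
  (forall n p q q', (1 <= p <= n)%nat -> (1 <= q)%nat -> (q <= q')%nat ->
      (q' <= n)%nat -> f n p q <= f n p q').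

Definition liminf_pos (f : nat -> nat -> nat -> R) (p q : nat -> nat) : Prop :=
  Rbar_lt (Finite 0) (LimInf_seq (fun n => f n (p n) (q n))).

Definition pq2n (p q : nat -> nat) (n : nat) : R :=
  INR (p n) * INR (q n) ^ 2 / INR n.

From Stdlib Require Import Reals Lra Lia Classical ClassicalEpsilon.
From Coquelicot Require Import Coquelicot.
Open Scope R_scope.

(* Suppose f_n(p_n, q_n) is frequently small. Where q_n <= K, the relation
   p_n q_n^2 ~ l n forces p_n >= n / D for a fixed D, so by monotonicity
   f_n(p_n, q_n) >= f_n(max(1, n/D), 1), which (i) bounds from below. Hence the
   small values occur along a subsequence on which q_n -> oo. Off that
   subsequence, wherever q_n < n^(1/4), replace (p_n, q_n) by
   (max(1, p_n q_n^2 / n^(1/2)), n^(1/4)): this moves p_n q_n^2 / n by at most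
   n^(-1/2) and makes q_n tend to infinity, so (ii) bounds f from below along
   the subsequence, a contradiction. *)

Definition condition_i (f : nat -> nat -> nat -> R) : Prop :=
  forall p q : nat -> nat, in_box p q ->
    (forall n, (1 <= n)%nat -> q n = 1%nat) ->
    (exists l : R, 0 < l < 1 /\ is_lim_seq (fun n => INR (p n) / INR n) (Finite l)) ->
    liminf_pos f p q.

Definition condition_ii (f : nat -> nat -> nat -> R) : Prop :=
  forall p q : nat -> nat, in_box p q ->
    is_lim_seq (fun n => INR (q n)) p_infty ->
    (exists l : R, 0 < l /\ is_lim_seq (pq2n p q) (Finite l)) ->
    liminf_pos f p q.

Lemma LimInf_seq_gt0 (u : nat -> R) :
  Rbar_lt 0 (LimInf_seq u) <-> exists eps, 0 < eps /\ eventually (fun n => eps < u n).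
Proof.
  split.
  - intros Hpos. pose proof (proj2_sig (ex_LimInf_seq u)) as Hli.
    change (is_LimInf_seq u (LimInf_seq u)) in Hli.
    destruct (LimInf_seq u) as [l | |]; simpl in Hpos, Hli.
    + assert (Hl2 : 0 < l / 2) by lra.
      destruct (Hli (mkposreal _ Hl2)) as [_ [N HN]].
      exists (l / 2). split; [lra |]. exists N. intros n Hn.
      specialize (HN n Hn). simpl in HN. lra.
    + exists 1. split; [lra | apply Hli].
    + contradiction.
  - intros [eps [Heps Hev]].
    apply Rbar_lt_le_trans with eps; [exact Heps |].
    rewrite <- (is_LimInf_seq_unique _ _ (is_LimInf_seq_const eps)).
    apply LimInf_le. revert Hev. apply filter_imp. intros n. lra.
Qed.

Lemma exists_INR_gt (M : R) : exists m : nat, M < INR m.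
Proof.
  pose proof is_lim_seq_INR as Hinf. apply is_lim_seq_spec in Hinf.
  exact (filter_ex _ (Hinf M)).
Qed.

Lemma is_lim_seq_inv_INR : is_lim_seq (fun n => / INR n) 0.
Proof. exact (is_lim_seq_inv _ _ is_lim_seq_INR ltac:(discriminate)). Qed.

Lemma is_lim_seq_near (a b c : nat -> R) (l : R) :
  eventually (fun n => Rabs (a n - b n) <= c n) ->
  is_lim_seq c 0 -> is_lim_seq b l -> is_lim_seq a l.
Proof.
  intros Hac Hc Hb.
  apply is_lim_seq_le_le_loc with (fun n => b n - c n) (fun n => b n + c n).
  - revert Hac. apply filter_imp. intros n Hn. apply Rabs_le_between in Hn. lra.
  - replace (Finite l) with (Finite (l - 0)) by (f_equal; ring).
    exact (is_lim_seq_minus' _ _ _ _ Hb Hc).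
  - replace (Finite l) with (Finite (l + 0)) by (f_equal; ring).
    exact (is_lim_seq_plus' _ _ _ _ Hb Hc).
Qed.

Lemma Rabs_div_le (x d y : R) : 0 < y -> Rabs x <= d -> Rabs (x / y) <= d / y.
Proof.
  intros Hy Hx. unfold Rdiv. rewrite Rabs_mult, Rabs_inv, (Rabs_pos_eq y) by lra.
  apply Rmult_le_compat_r; [apply Rlt_le, Rinv_0_lt_compat |]; assumption.
Qed.

Lemma Rabs_INR_sub_le (a b d : nat) :
  (a <= b + d)%nat -> (b <= a + d)%nat -> Rabs (INR a - INR b) <= INR d.
Proof.
  intros Hab Hba. apply le_INR in Hab, Hba. rewrite plus_INR in Hab, Hba.
  apply Rabs_le. lra.
Qed.

Lemma max1_div_mul_near (X d : nat) :
  (1 <= d)%nat -> Rabs (INR (max 1 (X / d) * d) - INR X) <= INR d.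
Proof.
  intros Hd.
  pose proof (Nat.div_mod X d ltac:(lia)) as HX.
  pose proof (Nat.mod_upper_bound X d ltac:(lia)) as Hr.
  revert HX Hr; generalize (X / d)%nat (X mod d)%nat; intros k r HX Hr.
  apply Rabs_INR_sub_le; destruct (Nat.max_spec 1 k) as [[Hk ->] | [Hk ->]]; nia.
Qed.

Lemma incr_seq_le (T : nat -> nat) :
  (forall k, (T k < T (S k))%nat) -> forall j k, (j <= k)%nat -> (T j <= T k)%nat.
Proof.
  intros HT j k Hjk. induction Hjk as [| k _ IH]; [lia |].
  specialize (HT k). lia.
Qed.

Lemma diagonal_subseq (P : nat -> nat -> Prop) :
  (forall k N, exists n, (N <= n)%nat /\ P k n) ->
  exists T : nat -> nat, (forall k, (T k < T (S k))%nat) /\ (forall k, P k (T k)).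
Proof.
  intros HP.
  destruct (choice (fun kN n => (snd kN <= n)%nat /\ P (fst kN) n)
                   (fun kN => HP (fst kN) (snd kN))) as [c Hc].
  set (T := fix T k := match k with 0 => c (0, 0)%nat | S k => c (S k, S (T k)) end).
  exists T. split.
  - intros k. exact (proj1 (Hc (S k, S (T k)))).
  - intros [| k]; [exact (proj2 (Hc (0, 0)%nat)) | exact (proj2 (Hc (S k, S (T k))))].
Qed.

Definition root4 (n : nat) : nat := Nat.sqrt (Nat.sqrt n).

Lemma root4_pow4_le n : (root4 n ^ 4 <= n)%nat.
Proof.
  unfold root4.
  pose proof (Nat.sqrt_spec' n) as [Hs _]. pose proof (Nat.sqrt_spec' (Nat.sqrt n)) as [Ht _].
  revert Hs Ht; generalize (Nat.sqrt n); intros s Hs Ht.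
  revert Ht; generalize (Nat.sqrt s); intros t Ht.
  pose proof (Nat.mul_le_mono _ _ _ _ Ht Ht). simpl. nia.
Qed.

Lemma root4_ge m n : (m ^ 4 <= n)%nat -> (m <= root4 n)%nat.
Proof.
  intros Hm. unfold root4.
  rewrite <- !Nat.sqrt_le_square.
  simpl in Hm. nia.
Qed.

Lemma root4_bounds n : (1 <= n)%nat -> (1 <= root4 n <= n)%nat.
Proof.
  intros Hn. pose proof (root4_ge 1 n Hn). pose proof (root4_pow4_le n).
  split; [assumption |]. apply Nat.le_trans with (root4 n ^ 4)%nat; [| assumption].
  rewrite <- (Nat.pow_1_r (root4 n)) at 1. apply Nat.pow_le_mono_r; lia.
Qed.

Lemma is_lim_seq_root4 : is_lim_seq (fun n => INR (root4 n)) p_infty.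
Proof.
  apply is_lim_seq_spec. intros M.
  destruct (exists_INR_gt M) as [m Hm].
  exists (m ^ 4)%nat. intros n Hn.
  apply Rlt_le_trans with (1 := Hm). apply le_INR, root4_ge, Hn.
Qed.

Lemma is_lim_seq_root4_sq_div : is_lim_seq (fun n => INR (root4 n) ^ 2 / INR n) 0.
Proof.
  apply is_lim_seq_le_le_loc with (fun _ => 0) (fun n => / INR (root4 n)).
  - exists 1%nat. intros n Hn.
    pose proof (root4_bounds n Hn) as [Hr _]. pose proof (root4_pow4_le n) as Hr4.
    apply le_INR in Hn, Hr, Hr4. rewrite pow_INR in Hr4. simpl in Hn, Hr.
    set (r := INR (root4 n)) in *.
    split.
    + apply Rdiv_le_0_compat; [apply pow_le |]; lra.
    + replace (/ r) with (r ^ 2 / r ^ 3) by (field; lra).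
      apply Rmult_le_compat_l; [apply pow_le; lra |].
      apply Rinv_le_contravar; [apply pow_lt; lra |].
      apply Rle_trans with (r ^ 4); [| exact Hr4].
      replace (r ^ 4) with (r ^ 3 * r) by ring.
      rewrite <- (Rmult_1_r (r ^ 3)) at 1.
      apply Rmult_le_compat_l; [apply pow_le |]; lra.
  - apply is_lim_seq_const.
  - exact (is_lim_seq_inv _ _ is_lim_seq_root4 ltac:(discriminate)).
Qed.

Lemma admissible_family_mono (f : nat -> nat -> nat -> R) (n p p' q q' : nat) :
  admissible_family f -> (1 <= p' <= p)%nat -> (p <= n)%nat ->
  (1 <= q' <= q)%nat -> (q <= n)%nat -> f n p' q' <= f n p q.
Proof.
  intros [_ [Hfp Hfq]] Hp Hpn Hq Hqn.
  apply Rle_trans with (f n p q'); [apply Hfp | apply Hfq]; lia.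
Qed.

Lemma is_lim_seq_max1_div_ratio (D : nat) :
  (1 <= D)%nat -> is_lim_seq (fun n => INR (max 1 (n / D)) / INR n) (/ INR D).
Proof.
  intros HD. apply is_lim_seq_near with (fun _ => / INR D) (fun n => / INR n).
  - exists 1%nat. intros n Hn.
    pose proof (max1_div_mul_near n D HD) as Hnear. rewrite mult_INR in Hnear.
    apply le_INR in HD, Hn. simpl in HD, Hn.
    replace (INR (max 1 (n / D)) / INR n - / INR D)
      with ((INR (max 1 (n / D)) * INR D - INR n) / (INR D * INR n)) by (field; lra).
    replace (/ INR n) with (INR D / (INR D * INR n)) by (field; lra).
    apply Rabs_div_le; [nra | exact Hnear].
  - exact is_lim_seq_inv_INR.
  - apply is_lim_seq_const.
Qed.

Lemma liminf_pos_max1_div (f : nat -> nat -> nat -> R) (D : nat) :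
  condition_i f ->
  (2 <= D)%nat -> liminf_pos f (fun n => max 1 (n / D)) (fun _ => 1%nat).
Proof.
  intros Hi HD. apply Hi.
  - intros n Hn. split; [| lia]. split; [lia |].
    apply Nat.max_lub; [exact Hn |]. apply Nat.Div0.div_le_upper_bound. nia.
  - reflexivity.
  - exists (/ INR D). split; [| apply is_lim_seq_max1_div_ratio; lia].
    apply le_INR in HD. simpl in HD. split.
    + apply Rinv_0_lt_compat. lra.
    + rewrite <- Rinv_1. apply Rinv_lt_contravar; lra.
Qed.

Lemma div_le_of_pq2n_gt (n P Q K D : nat) (l : R) :
  0 < l -> 2 * INR K ^ 2 < INR D * l -> (1 <= n)%nat -> (Q <= K)%nat ->
  l / 2 < INR P * INR Q ^ 2 / INR n -> (n / D <= P)%nat.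
Proof.
  intros Hl HD Hn HQ Hgt.
  apply le_INR in Hn, HQ. simpl in Hn.
  assert (HnP : INR n < INR D * INR P).
  { apply Rmult_lt_compat_r with (r := INR n) in Hgt; [| lra].
    replace (INR P * INR Q ^ 2 / INR n * INR n) with (INR P * INR Q ^ 2) in Hgt
      by (field; lra).
    assert (HQK : INR Q ^ 2 <= INR K ^ 2) by (apply pow_incr; split; [apply pos_INR | lra]).
    pose proof (pos_INR P). nra. }
  rewrite <- mult_INR in HnP. apply INR_lt in HnP.
  apply Nat.Div0.div_le_upper_bound. lia.
Qed.

Lemma bounded_below_where_q_bounded (f : nat -> nat -> nat -> R) (p q : nat -> nat)
    (l : R) (K : nat) :
  admissible_family f ->
  condition_i f ->
  in_box p q -> 0 < l -> is_lim_seq (pq2n p q) l ->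
  exists eps, 0 < eps /\ eventually (fun n => (q n <= K)%nat -> eps < f n (p n) (q n)).
Proof.
  intros Hf Hi Hbox Hl Hlim.
  destruct (exists_INR_gt (2 * INR K ^ 2 / l)) as [D0 HD0].
  set (D := (D0 + 2)%nat).
  assert (HD : 2 * INR K ^ 2 < INR D * l).
  { unfold D. rewrite plus_INR. simpl.
    apply Rmult_lt_compat_r with (r := l) in HD0; [| exact Hl].
    unfold Rdiv in HD0. rewrite Rmult_assoc, Rinv_l in HD0 by lra. nra. }
  destruct (proj1 (LimInf_seq_gt0 _) (liminf_pos_max1_div f D Hi ltac:(lia)))
    as [eps [Heps [N1 HN1]]].
  apply is_lim_seq_spec in Hlim.
  destruct (Hlim (mkposreal (l / 2) ltac:(lra))) as [N2 HN2].
  exists eps. split; [exact Heps |].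
  exists (max 1 (max N1 N2)). intros n Hn HqK.
  specialize (HN1 n ltac:(lia)). specialize (HN2 n ltac:(lia)). simpl in HN2.
  apply Rabs_lt_between in HN2.
  destruct (Hbox n ltac:(lia)) as [Hpn Hqn].
  assert (Hdiv : (n / D <= p n)%nat).
  { apply (div_le_of_pq2n_gt n (p n) (q n) K D l); try assumption; [lia |].
    unfold pq2n in HN2. lra. }
  apply Rlt_le_trans with (1 := HN1).
  apply (admissible_family_mono f); [exact Hf | lia .. ].
Qed.

Lemma frequently_small_with_large_q (u : nat -> R) (q : nat -> nat) :
  (forall K, exists eps, 0 < eps /\ eventually (fun n => (q n <= K)%nat -> eps < u n)) ->
  ~ (exists eps, 0 < eps /\ eventually (fun n => eps < u n)) ->
  forall k N, exists n, (N <= n)%nat /\ (k < q n)%nat /\ u n < / INR (S k).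
Proof.
  intros Hbounded Hsmall k N.
  destruct (Hbounded k) as [eps [Heps [N0 HN0]]].
  apply NNPP. intros Hnone. apply Hsmall.
  assert (Hk : 0 < / INR (S k)) by (apply Rinv_0_lt_compat, lt_0_INR; lia).
  pose proof (Rmin_l eps (/ INR (S k))). pose proof (Rmin_r eps (/ INR (S k))).
  pose proof (Rmin_pos eps (/ INR (S k)) Heps Hk).
  exists (Rmin eps (/ INR (S k)) / 2). split; [lra |].
  exists (max N N0). intros n Hn.
  destruct (Nat.le_gt_cases (q n) k) as [Hq | Hq].
  - specialize (HN0 n ltac:(lia) Hq). lra.
  - assert (~ u n < / INR (S k)) by
      (intros Hu; apply Hnone; exists n; repeat split; [lia | lia | exact Hu]).
    lra.
Qed.

Section RaiseQ.

Variables (p q : nat -> nat) (J : nat -> Prop).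

Definition raise_keep (n : nat) : Prop := J n \/ (root4 n <= q n)%nat.

Definition raise_p (n : nat) : nat :=
  if excluded_middle_informative (raise_keep n) then p n
  else max 1 (p n * q n ^ 2 / root4 n ^ 2).

Definition raise_q (n : nat) : nat :=
  if excluded_middle_informative (raise_keep n) then q n else root4 n.

Lemma raise_agrees n : J n -> raise_p n = p n /\ raise_q n = q n.
Proof.
  intros Hn. unfold raise_p, raise_q.
  destruct (excluded_middle_informative (raise_keep n)) as [_ | Hk]; [split; reflexivity |].
  exfalso. apply Hk. left. exact Hn.
Qed.

Lemma raise_in_box : in_box p q -> in_box raise_p raise_q.
Proof.
  intros Hbox n Hn. unfold raise_p, raise_q.
  destruct (excluded_middle_informative (raise_keep n)) as [_ | Hk]; [apply Hbox, Hn |].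
  assert (Hqr : (q n < root4 n)%nat) by (unfold raise_keep in Hk; lia).
  destruct (Hbox n Hn) as [Hpn Hqn]. pose proof (root4_bounds n Hn) as Hr.
  split; [| exact Hr]. split; [lia |].
  apply Nat.max_lub; [exact Hn |].
  apply Nat.le_trans with (p n); [| lia].
  apply Nat.Div0.div_le_upper_bound.
  assert (q n ^ 2 <= root4 n ^ 2)%nat by (apply Nat.pow_le_mono_l; lia).
  nia.
Qed.

Lemma is_lim_seq_raise_q :
  (forall K, eventually (fun n => J n -> (K < q n)%nat)) ->
  is_lim_seq (fun n => INR (raise_q n)) p_infty.
Proof.
  intros HJ. apply is_lim_seq_spec. intros M.
  destruct (exists_INR_gt M) as [m Hm].
  destruct (HJ m) as [N HN].
  exists (max N (m ^ 4)). intros n Hn.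
  apply Rlt_le_trans with (1 := Hm). apply le_INR.
  pose proof (root4_ge m n ltac:(lia)).
  unfold raise_q. destruct (excluded_middle_informative (raise_keep n)) as [[HJn | Hr] | _].
  - specialize (HN n ltac:(lia) HJn). lia.
  - lia.
  - assumption.
Qed.

Lemma is_lim_seq_pq2n_raise (l : R) :
  is_lim_seq (pq2n p q) l -> is_lim_seq (pq2n raise_p raise_q) l.
Proof.
  intros Hlim.
  apply is_lim_seq_near with (pq2n p q) (fun n => INR (root4 n) ^ 2 / INR n);
    [| exact is_lim_seq_root4_sq_div | exact Hlim].
  exists 1%nat. intros n Hn.
  pose proof (root4_bounds n Hn) as [Hr _].
  apply le_INR in Hn. simpl in Hn.
  unfold pq2n, raise_p, raise_q.
  destruct (excluded_middle_informative (raise_keep n)) as [_ | _].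
  - rewrite Rminus_diag, Rabs_R0.
    apply Rdiv_le_0_compat; [apply pow_le, pos_INR | lra].
  - replace (INR (max 1 (p n * q n ^ 2 / root4 n ^ 2)) * INR (root4 n) ^ 2 / INR n
             - INR (p n) * INR (q n) ^ 2 / INR n)
      with ((INR (max 1 (p n * q n ^ 2 / root4 n ^ 2) * root4 n ^ 2)
             - INR (p n * q n ^ 2)) / INR n)
      by (rewrite !mult_INR, !pow_INR; field; lra).
    rewrite <- pow_INR. apply Rabs_div_le; [lra |].
    apply max1_div_mul_near. apply Nat.pow_le_mono_l with (c := 2%nat) in Hr. exact Hr.
Qed.

End RaiseQ.

Lemma bounded_below_along_q_infty (f : nat -> nat -> nat -> R) (p q : nat -> nat)
    (l : R) (T : nat -> nat) :
  condition_ii f ->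
  in_box p q -> 0 < l -> is_lim_seq (pq2n p q) l ->
  (forall k, (T k < T (S k))%nat) -> (forall k, (k < q (T k))%nat) ->
  exists eps, 0 < eps /\ eventually (fun k => eps < f (T k) (p (T k)) (q (T k))).
Proof.
  intros Hii Hbox Hl Hlim HT HqT.
  set (J := fun n => exists k, T k = n).
  assert (HJ : forall K, eventually (fun n => J n -> (K < q n)%nat)).
  { intros K. exists (S (T K)). intros n Hn [k <-].
    destruct (Nat.le_gt_cases k K) as [HkK | HkK].
    - pose proof (incr_seq_le T HT k K HkK). lia.
    - specialize (HqT k). lia. }
  assert (Hpos : liminf_pos f (raise_p p q J) (raise_q q J)).
  { apply Hii.
    - apply raise_in_box, Hbox.
    - apply is_lim_seq_raise_q, HJ.
    - exists l. split; [exact Hl | apply is_lim_seq_pq2n_raise, Hlim]. }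
  apply LimInf_seq_gt0 in Hpos as [eps [Heps Hev]].
  exists eps. split; [exact Heps |].
  specialize (eventually_subseq T HT _ Hev). unfold filtermap. apply filter_imp. intros k.
  destruct (raise_agrees p q J (T k) (ex_intro _ k eq_refl)) as [-> ->]. trivial.
Qed.

Theorem lemma3p6 (f : nat -> nat -> nat -> R) :
  admissible_family f ->
  (* (i) *)
  (forall p q : nat -> nat, in_box p q ->
     (forall n, (1 <= n)%nat -> q n = 1%nat) ->
     (exists l : R, 0 < l < 1 /\
        is_lim_seq (fun n => INR (p n) / INR n) (Finite l)) ->
     liminf_pos f p q) ->
  (* (ii) *)
  (forall p q : nat -> nat, in_box p q ->
     is_lim_seq (fun n => INR (q n)) p_infty ->
     (exists l : R, 0 < l /\ is_lim_seq (pq2n p q) (Finite l)) ->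
     liminf_pos f p q) ->
  forall p q : nat -> nat, in_box p q ->
     (exists l : R, 0 < l /\ is_lim_seq (pq2n p q) (Finite l)) ->
     liminf_pos f p q.
Proof.
  intros Hf Hi Hii p q Hbox [l [Hl Hlim]].
  apply LimInf_seq_gt0, NNPP. intros Hsmall.
  pose proof (fun K => bounded_below_where_q_bounded f p q l K Hf Hi Hbox Hl Hlim) as Hbounded.
  destruct (diagonal_subseq _ (frequently_small_with_large_q _ q Hbounded Hsmall))
    as [T [HT HTsmall]].
  destruct (bounded_below_along_q_infty f p q l T Hii Hbox Hl Hlim HT
              (fun k => proj1 (HTsmall k))) as [eps [Heps Hev]].
  assert (Hinv : eventually (fun k => / INR (S k) < eps)).
  { pose proof is_lim_seq_inv_INR as H0. apply is_lim_seq_incr_1, is_lim_seq_spec in H0.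
    destruct (H0 (mkposreal eps Heps)) as [N HN]. exists N. intros k Hk.
    specialize (HN k Hk). apply Rabs_lt_between in HN. cbn [pos] in HN. lra. }
  destruct (filter_ex _ (filter_and _ _ Hev Hinv)) as [k [Hbig Hk]].
  pose proof (proj2 (HTsmall k)). lra.
Qed.
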